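(* Let $X$ be a topological space admitting a metrizable compactification $\tilde X$, and let $T\colon X\to X$ be continuous. If $d$ and $c$ are the restrictions to $X$ of metrics $\tilde d$ and $\tilde c$ on $\tilde X$ compatible with its topology, then $h^d(T)=h^c(T)$.
   Context: For a metric $d$ on $X$: $d_n(x,y)=\max_{0\le j<n}d(T^jx,T^jy)$, $\mathcal B_{d_n}(\varepsilon)$ is the family of open $d_n$-balls of radius $\varepsilon$ centered at points of $X$, $N(\mathcal A)$ denotes the least cardinality of a subcover of a cover $\mathcal A$, and the $d$-entropy is $h^d(T)=\sup_{\varepsilon>0}\lim_n\frac1n\log N(\mathcal B_{d_n}(\varepsilon))$. *)

From HB Require Import structures.
From mathcomp Require Import all_boot all_order all_algebra.
From mathcomp Require Import all_classical all_reals all_analysis.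
From mathcomp Require Import finmap.
Set Implicit Arguments. Unset Strict Implicit. Unset Printing Implicit Defensive.
Import Order.TTheory GRing.Theory Num.Theory.
Local Open Scope classical_set_scope.
Local Open Scope ring_scope.

Section Entropy.
Variable R : realType.

Definition is_metric (Y : Type) (d : Y -> Y -> R) : Prop :=
  [/\ forall x y, 0 <= d x y,
      forall x y, d x y = 0 <-> x = y,
      forall x y, d x y = d y x &
      forall x y z, d x z <= d x y + d y z].

Definition compatible_metric (Y : topologicalType) (d : Y -> Y -> R) : Prop :=
  is_metric d /\
  forall U : set Y, open U <->
    (forall y, U y -> exists2 r : R, 0 < r & [set z | d y z < r] `<=` U).

Definition embedding (X Y : topologicalType) (e : X -> Y) : Prop :=
  [/\ injective e, continuous e &
      forall U : set X, open U -> exists2 V : set Y, open V & e @` U = V `&` range e].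

(** ([Y], [e]) is a metrizable compactification of [X]; metrizability is
    witnessed separately by the compatible metrics given in the theorem. *)
Definition compactification (X Y : topologicalType) (e : X -> Y) : Prop :=
  [/\ compact [set: Y], embedding e & dense (range e)].

Variable X : choiceType.

Definition bowen (T : X -> X) (d : X -> X -> R) (n : nat) (x y : X) : R :=
  \big[Order.max/0]_(j < n) d (iter j T x) (iter j T y).

(** N(B_{d_n}(eps)): least cardinality of a subcover of the family of open
    d_n-balls of radius eps centred at points of X (a subfamily is given by a
    set of centres); +oo if there is no finite subcover. *)
Definition Ncover (T : X -> X) (d : X -> X -> R) (n : nat) (eps : R) : \bar R :=
  ereal_inf [set ((#|` F|)%:R)%:E | F in
     [set F : {fset X} | forall x : X, exists2 y, y \in F & bowen T d n y x < eps]].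

Definition cover_rate (T : X -> X) (d : X -> X -> R) (eps : R) (n : nat) : \bar R :=
  match Ncover T d n eps with
  | r%:E => (ln r / n%:R)%:E
  | +oo%E => +oo%E
  | -oo%E => -oo%E
  end.

(** d-entropy h^d(T) = sup_{eps>0} lim_n (1/n) log N(B_{d_n}(eps)),
    with lim read as limsup. *)
Definition d_entropy (T : X -> X) (d : X -> X -> R) : \bar R :=
  ereal_sup [set limn_esup (cover_rate T d eps) | eps in [set e : R | 0 < e]].

End Entropy.

From HB Require Import structures.
From mathcomp Require Import all_boot all_order all_algebra.
From mathcomp Require Import all_classical all_reals all_analysis.
From mathcomp Require Import finmap.
Set Implicit Arguments. Unset Strict Implicit. Unset Printing Implicit Defensive.
Import Order.TTheory GRing.Theory Num.Theory.
Local Open Scope classical_set_scope.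
Local Open Scope ring_scope.

(** Any two metrics inducing the topology of a compact space are uniformly
    equivalent: for every [eps > 0] there is [delta > 0] such that
    [d]-closeness within [delta] forces [c]-closeness within [eps].  Then every
    cover by [delta]-balls of [d_n] is also a cover by [eps]-balls of [c_n], so
    [N(B_{c_n}(eps)) <= N(B_{d_n}(delta))], whence [h^c(T) <= h^d(T)], and
    symmetrically. *)

Definition unif_finer {R : realType} {Y : Type} (d c : Y -> Y -> R) : Prop :=
  forall eps, 0 < eps -> exists2 delta, 0 < delta &
    forall x y, d x y < delta -> c x y < eps.

Lemma le_limn_esup (R : realType) (u v : (\bar R)^nat) :
  (forall n, (u n <= v n)%E) -> (limn_esup u <= limn_esup v)%E.
Proof.
move=> uv; rewrite !limn_esup_lim; apply: lee_lim; try exact: is_cvg_esups.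
apply: nearW => n; apply: ge_ereal_sup => _ [k /= nk <-].
by apply: le_trans (uv k) _; apply: ereal_sup_ubound; exists k.
Qed.

Section EntropyMonotone.
Variables (R : realType) (X : choiceType) (T : X -> X).
Implicit Types (d c : X -> X -> R) (n : nat) (eps delta : R).

Lemma Ncover_ge0 d n eps : (0 <= Ncover T d n eps)%E.
Proof. by apply: le_ereal_inf_tmp => _ [F _ <-]; rewrite lee_fin. Qed.

Lemma Ncover_eq0_or_ge1 d n eps r :
  Ncover T d n eps = r%:E -> r = 0 \/ 1 <= r.
Proof.
move=> Nr; have r_ge0 : 0 <= r by have := Ncover_ge0 d n eps; rewrite Nr lee_fin.
have [r_ge1|r_lt1] := leP 1 r; first by right.
left; have : (Ncover T d n eps < 1%:E)%E by rewrite Nr lte_fin.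
move=> /ereal_inf_lt [_ [F coverF <-]].
rewrite lte_fin -[1]/(1%:R) ltr_nat ltnS leqn0 => /eqP F0.
have : (Ncover T d n eps <= 0%:E)%E.
  by apply: ge_ereal_inf; exists ((#|` F|)%:R)%:E; [exists F | rewrite F0].
by rewrite Nr lee_fin => r_le0; apply/eqP; rewrite eq_le r_le0.
Qed.

Lemma ln_Ncover_ge0 d n eps r : Ncover T d n eps = r%:E -> 0 <= ln r.
Proof. by move=> /Ncover_eq0_or_ge1 [->|/ln_ge0//]; rewrite ln0. Qed.

Section Domination.
Variables (d c : X -> X -> R) (eps delta : R).
Hypothesis eps_gt0 : 0 < eps.
Hypothesis dom : forall x y, d x y < delta -> c x y < eps.

Lemma Ncover_le n : (Ncover T c n eps <= Ncover T d n delta)%E.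
Proof.
apply: ereal_inf_le_tmp => _ [F coverF <-]; exists F => // x.
have [y yF dxy] := coverF x; exists y => //.
apply: bigmax_lt => // j _; apply: dom; apply: le_lt_trans dxy.
exact: (le_bigmax _ (fun j : 'I_n => d (iter j T y) (iter j T x)) j).
Qed.

Lemma cover_rate_le n : (cover_rate T c eps n <= cover_rate T d delta n)%E.
Proof.
have := Ncover_le n; rewrite /cover_rate.
case Nd: (Ncover T d n delta) => [r| |]; last first.
- by have := Ncover_ge0 d n delta; rewrite Nd.
- by case: (Ncover T c n eps) => [?| |] _; rewrite ?leey.
case: (Ncover T c n eps) => [s| |] //; rewrite ?leNye // !lee_fin => sr.
rewrite ler_wpM2r ?invr_ge0 //.
(* [ln] is not monotone across the junk value [ln 0 = 0]; this is where
   [Ncover] taking values in [{0} \cup [1, +oo)] is needed. *)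
have [s_le0|s_gt0] := leP s 0.
  by rewrite (ln0 s_le0); exact: ln_Ncover_ge0 Nd.
by rewrite ler_ln // posrE (lt_le_trans s_gt0 sr).
Qed.

End Domination.

Lemma d_entropy_le d c : unif_finer d c -> (d_entropy T c <= d_entropy T d)%E.
Proof.
move=> dc; apply: ge_ereal_sup => _ [eps eps_gt0 <-].
have [delta delta_gt0 dom] := dc eps eps_gt0.
apply: le_trans (le_limn_esup (cover_rate_le eps_gt0 dom)) _.
by apply: ereal_sup_ubound; exists delta.
Qed.

End EntropyMonotone.

Section CompactMetrics.
Variables (R : realType) (Y : topologicalType).
Implicit Types (d c : Y -> Y -> R).

Lemma compatible_metric_ball_open d y r :
  compatible_metric d -> open [set z | d y z < r].
Proof.
move=> [[_ _ _ d_tri] d_open]; apply/d_open => z /= dyz.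
exists (r - d y z); first by rewrite subr_gt0.
by move=> w /= dzw; apply: le_lt_trans (d_tri y z w) _; rewrite -ltrBrDl.
Qed.

Lemma compatible_metric_ball_nbhs d y r :
  compatible_metric d -> 0 < r -> nbhs y [set z | d y z < r].
Proof.
move=> hd r_gt0; apply: open_nbhs_nbhs; split.
  exact: compatible_metric_ball_open.
by case: hd => [[_ d_eq0 _ _] _]; rewrite /= (proj2 (d_eq0 y y)).
Qed.

Lemma compatible_metric_ball_sub d c y eps :
  compatible_metric d -> compatible_metric c -> 0 < eps ->
  exists2 r, 0 < r & [set z | d y z < r] `<=` [set z | c y z < eps].
Proof.
move=> [_ d_open] hc eps_gt0; apply: (proj1 (d_open _)).
  exact: compatible_metric_ball_open.
by case: hc => [[_ c_eq0 _ _] _]; rewrite /= (proj2 (c_eq0 y y)).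
Qed.

(* The Lebesgue-number argument: compactness turns the pointwise radii of
   [compatible_metric_ball_sub] (taken at [eps/2]) into a uniform [1/(n+1)]. *)
Lemma compact_unif_finer d c :
  compact [set: Y] -> compatible_metric d -> compatible_metric c -> unif_finer d c.
Proof.
move=> Ycpt hd hc eps eps_gt0.
have eps2_gt0 : 0 < eps / 2 by rewrite divr_gt0.
pose close n y := forall z, d y z < n.+1%:R^-1 -> c y z < eps.
have close_near y : [set: Y] y -> \forall y' \near y & n \near \oo, close n y'.
  move=> _; have [r r_gt0 dc] := compatible_metric_ball_sub y hd hc eps2_gt0.
  have r2_gt0 : 0 < r / 2 by rewrite divr_gt0.
  exists ([set y' | d y y' < r / 2], [set n : nat | n.+1%:R^-1 < r / 2]).
    by split; [exact: compatible_metric_ball_nbhs|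
               exact: (near_infty_natSinv_lt (PosNum r2_gt0))].
  case: hd hc => [[_ _ _ d_tri] _] [[_ _ c_sym c_tri] _].
  move=> [y' n] [/= dyy' n_small] z dy'z.
  have cyz : c y z < eps / 2.
    apply: dc; apply: le_lt_trans (d_tri y y' z) _.
    by rewrite (splitr r) ltrD // (lt_trans dy'z).
  have cyy' : c y y' < eps / 2.
    by apply: dc; apply: lt_trans dyy' _; rewrite ltr_pdivrMr // ltr_pMr ?ltr1n.
  by apply: le_lt_trans (c_tri y' y z) _; rewrite c_sym (splitr eps) ltrD.
have [n close_n] := filter_ex
  ((proj1 (compact_near_coveringP [set: Y])) Ycpt nat \oo close _ close_near).
by exists n.+1%:R^-1; [rewrite invr_gt0 ltr0n | move=> y z; apply: close_n].
Qed.

End CompactMetrics.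

Theorem corollary2p29 (R : realType) (X Y : topologicalType) (e : X -> Y)
  (T : X -> X) (dt ct : Y -> Y -> R) :
  compactification e ->
  continuous T ->
  compatible_metric dt ->
  compatible_metric ct ->
  d_entropy T (fun x y => dt (e x) (e y)) = d_entropy T (fun x y => ct (e x) (e y)).
Proof.
move=> [Ycpt _ _] _ hd hc.
have pullback (a b : Y -> Y -> R) : unif_finer a b ->
    unif_finer (fun x y => a (e x) (e y)) (fun x y => b (e x) (e y)).
  by move=> ab eps /ab[delta ? dom]; exists delta => // x y /dom.
apply/eqP; rewrite eq_le; apply/andP; split; apply: d_entropy_le; apply: pullback.
- exact: (compact_unif_finer Ycpt hc hd).
- exact: (compact_unif_finer Ycpt hd hc).
Qed.
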